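(* Let $(\mathcal X_S,\mathcal X_O,\mathcal X_A,\mathfrak p,\mathbf r)$ be a POMDP and $T\in\mathbb Z_+$. The linear relaxation of the MILP is equivalent to the MDP approximation LP: from any feasible solution of either one can build a feasible solution of the other with the same objective value; in particular $z^*_{\mathrm R}=v^*_{\mathrm{MDP}}$. Moreover $$z^*_{\mathrm{MILP}}\le v^*_{\mathrm{his}}\le z^*_{\mathrm R^{\mathrm c}}\le z^*_{\mathrm R}=v^*_{\mathrm{MDP}}.$$
   Context: A POMDP has finite spaces $\mathcal X_S,\mathcal X_O,\mathcal X_A$, initial distribution $p(s)$, emissions $p(o|s)$, transitions $p(s'|s,a)$, reward $r(s,a,s')$; $T$ is a horizon. A history-dependent policy is $\delta=(\delta^t_{a|h})$, $h\in(\mathcal X_O\times\mathcal X_A)^{t-1}\times\mathcal X_O$, $\delta^t_{a|h}\ge0$, $\sum_a\delta^t_{a|h}=1$; it induces $\mathbb P_\delta$ with $\mathbb P_\delta(\text{trajectory})=p(s_1)\prod_{t=1}^T p(o_t|s_t)p(s_{t+1}|s_t,a_t)\delta^t_{a_t|h_t}$, $h_t=(o_1,a_1,\dots,a_{t-1},o_t)$; $v^*_{\mathrm{his}}$ is the maximum of $\mathbb E_\delta[\sum_{t=1}^T r(S_t,A_t,S_{t+1})]$ over such policies. $\mathcal Q^{\mathrm d}$: pairs $(\mu,\delta)$ with $\delta^t_{a|o}\in\{0,1\}$, $\sum_a\delta^t_{a|o}=1$, nonnegative $\mu=((\mu^1_s),(\mu^t_{soa}),(\mu^t_{sas'}))$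 with (i) $\mu^1_s=p(s)$; (ii) $\sum_{o,a}\mu^t_{soa}=\nu^t_s$ where $\nu^1_s=\mu^1_s$, $\nu^t_s=\sum_{s'',a''}\mu^{t-1}_{s''a''s}$ ($t\ge2$); (iii) $\sum_{\bar s}\mu^t_{sa\bar s}=\sum_o\mu^t_{soa}$; (iv) $\mu^t_{sas'}=p(s'|s,a)\sum_{\bar s}\mu^t_{sa\bar s}$; (McCormick) $\mu^t_{soa}\le p(o|s)\nu^t_s$, $\mu^t_{soa}\le\delta^t_{a|o}$, $\mu^t_{soa}\ge p(o|s)\nu^t_s+\delta^t_{a|o}-1$. The MILP maximizes $\sum_t\sum_{s,a,s'}r(s,a,s')\mu^t_{sas'}$ over $\mathcal Q^{\mathrm d}$, value $z^*_{\mathrm{MILP}}$. $z^*_{\mathrm R}$ is the value of its linear relaxation ($\delta^t_{a|o}\in[0,1]$), and $z^*_{\mathrm R^{\mathrm c}}$ the value of that linear relaxation with additional nonnegative variables $\mu^t_{s'a'soa}$ ($t\ge2$) and the constraints: $\sum_{s',a'}\mu^t_{s'a'soa}=\mu^t_{soa}$; $\sum_a\mu^t_{s'a'soa}=p(o|s)\mu^{t-1}_{s'a's}$; $\mu^t_{s'a'soa}=p(s|s',a',o)\sum_{\bar s}\mu^t_{s'a'\bar soa}$ with $p(s|s',a',o)=p(o|s)p(s|s',a')/\sum_{\bar s}p(o|\bar s)p(\bar s|s',a')$. The MDP approximation LP: maximize $\sum_t\sum_{s,a,s'}r(s,a,s')\mu^t_{sas'}$ over nonnegative $(\mu^1_s),(\mu^t_{sas'})$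 with $\mu^1_s=p(s)$, $\sum_{a,s'}\mu^1_{sas'}=\mu^1_s$, $\sum_{a,s'}\mu^t_{sas'}=\sum_{s'',a''}\mu^{t-1}_{s''a''s}$ for $t\ge2$, and $\mu^t_{sas'}=p(s'|s,a)\sum_{\bar s}\mu^t_{sa\bar s}$; its value is $v^*_{\mathrm{MDP}}$. *)

From HB Require Import structures.
From mathcomp Require Import all_boot all_order all_algebra.
From mathcomp Require Import classical_sets reals.
Set Implicit Arguments. Unset Strict Implicit. Unset Printing Implicit Defensive.
Import Order.TTheory GRing.Theory Num.Theory.
Local Open Scope ring_scope.
Local Open Scope classical_set_scope.

(* A finite POMDP: initial distribution p(s), emissions p(o|s),
   transitions p(s'|s,a) and reward r(s,a,s'). *)
Record pomdp (R : realType) (S O A : finType) := Pomdp {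
  p0 : S -> R;
  pe : S -> O -> R;
  pt : S -> A -> S -> R;
  rw : S -> A -> S -> R }.

Section POMDP.
Context (R : realType) (S O A : finType) (P : pomdp R S O A) (T : nat).

Definition is_pomdp : Prop :=
  (forall s, 0 <= p0 P s) /\ \sum_s p0 P s = 1 /\
  (forall s o, 0 <= pe P s o) /\ (forall s, \sum_o pe P s o = 1) /\
  (forall s a s', 0 <= pt P s a s') /\ (forall s a, \sum_s' pt P s a s' = 1).

(* Time indices t range over 1..T; variables are functions of t : nat. *)

Definition objective (muT : nat -> S -> A -> S -> R) : R :=
  \sum_(1 <= t < T.+1) \sum_s \sum_a \sum_s' rw P s a s' * muT t s a s'.

Definition nuv (mu1 : S -> R) (muT : nat -> S -> A -> S -> R) (t : nat) (s : S) : R :=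
  if t == 1%N then mu1 s else \sum_(s'' : S) \sum_(a'' : A) muT t.-1 s'' a'' s.

Definition milp_feasible (integral : bool) (mu1 : S -> R)
  (muO : nat -> S -> O -> A -> R) (muT : nat -> S -> A -> S -> R)
  (del : nat -> O -> A -> R) : Prop :=
  (forall s, 0 <= mu1 s) /\
  (forall s, mu1 s = p0 P s) /\
  forall t, (1 <= t <= T)%N ->
    (forall o a, if integral then (del t o a = 0 \/ del t o a = 1)
                 else (0 <= del t o a /\ del t o a <= 1)) /\
    (forall o, \sum_a del t o a = 1) /\
    (forall s o a, 0 <= muO t s o a) /\
    (forall s a s', 0 <= muT t s a s') /\
    (forall s, \sum_o \sum_a muO t s o a = nuv mu1 muT t s) /\
    (forall s a, \sum_sb muT t s a sb = \sum_o muO t s o a) /\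
    (forall s a s', muT t s a s' = pt P s a s' * \sum_sb muT t s a sb) /\
    (forall s o a, muO t s o a <= pe P s o * nuv mu1 muT t s) /\
    (forall s o a, muO t s o a <= del t o a) /\
    (forall s o a, pe P s o * nuv mu1 muT t s + del t o a - 1 <= muO t s o a).

(* p(s | s', a', o) = p(o|s) p(s|s',a') / sum_sb p(o|sb) p(sb|s',a')
   (with MathComp's convention x / 0 = 0). *)
Definition pcond (s' : S) (a' : A) (o : O) (s : S) : R :=
  pe P s o * pt P s' a' s / \sum_sb pe P sb o * pt P s' a' sb.

Definition rc_extra (muO : nat -> S -> O -> A -> R) (muT : nat -> S -> A -> S -> R)
  (muC : nat -> S -> A -> S -> O -> A -> R) : Prop :=
  forall t, (2 <= t <= T)%N ->
    (forall s' a' s o a, 0 <= muC t s' a' s o a) /\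
    (forall s o a, \sum_s' \sum_a' muC t s' a' s o a = muO t s o a) /\
    (forall s' a' s o, \sum_a muC t s' a' s o a = pe P s o * muT t.-1 s' a' s) /\
    (forall s' a' s o a,
       muC t s' a' s o a = pcond s' a' o s * \sum_sb muC t s' a' sb o a).

Definition mdp_feasible (mu1 : S -> R) (muT : nat -> S -> A -> S -> R) : Prop :=
  (forall s, 0 <= mu1 s) /\
  (forall s, mu1 s = p0 P s) /\
  (forall t, (1 <= t <= T)%N -> forall s a s', 0 <= muT t s a s') /\
  (forall s, \sum_a \sum_s' muT 1%N s a s' = mu1 s) /\
  (forall t, (2 <= t <= T)%N -> forall s,
     \sum_a \sum_s' muT t s a s' = \sum_(s'' : S) \sum_(a'' : A) muT t.-1 s'' a'' s) /\
  (forall t, (1 <= t <= T)%N -> forall s a s',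
     muT t s a s' = pt P s a s' * \sum_sb muT t s a sb).

Definition z_MILP : R := sup [set x | exists mu1 muO muT del,
  milp_feasible true mu1 muO muT del /\ x = objective muT].
Definition z_R : R := sup [set x | exists mu1 muO muT del,
  milp_feasible false mu1 muO muT del /\ x = objective muT].
Definition z_Rc : R := sup [set x | exists mu1 muO muT del muC,
  milp_feasible false mu1 muO muT del /\ rc_extra muO muT muC /\ x = objective muT].
Definition v_MDP : R := sup [set x | exists mu1 muT,
  mdp_feasible mu1 muT /\ x = objective muT].

(* History-dependent policies: delta t h o a = delta^t_{a | (h, o)}, where h is
   the list of past (observation, action) pairs (o_1,a_1),...,(o_{t-1},a_{t-1}). *)
Definition hpolicy := nat -> seq (O * A) -> O -> A -> R.

Definition is_hpolicy (d : hpolicy) : Prop :=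
  forall t h o, (forall a, 0 <= d t h o a) /\ \sum_a d t h o a = 1.

(* Trajectories: states s_1..s_{T+1} (index i <-> s_{i+1}),
   observations and actions o_1..o_T, a_1..a_T (index i <-> time i+1). *)
Definition hist (os : {ffun 'I_T -> O}) (acts : {ffun 'I_T -> A}) (i : 'I_T) : seq (O * A) :=
  map (fun j : 'I_T => (os j, acts j)) (filter (fun j : 'I_T => (j < i)%N) (enum 'I_T)).

Definition traj_prob (d : hpolicy) (ss : {ffun 'I_T.+1 -> S})
  (os : {ffun 'I_T -> O}) (acts : {ffun 'I_T -> A}) : R :=
  p0 P (ss ord0) *
  \prod_(i < T) (pe P (ss (widen_ord (leqnSn T) i)) (os i) *
                 pt P (ss (widen_ord (leqnSn T) i)) (acts i) (ss (lift ord0 i)) *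
                 d i.+1 (hist os acts i) (os i) (acts i)).

Definition traj_reward (ss : {ffun 'I_T.+1 -> S}) (acts : {ffun 'I_T -> A}) : R :=
  \sum_(i < T) rw P (ss (widen_ord (leqnSn T) i)) (acts i) (ss (lift ord0 i)).

Definition his_value (d : hpolicy) : R :=
  \sum_(ss : {ffun 'I_T.+1 -> S}) \sum_(os : {ffun 'I_T -> O})
    \sum_(acts : {ffun 'I_T -> A}) traj_prob d ss os acts * traj_reward ss acts.

Definition v_his : R := sup [set x | exists d, is_hpolicy d /\ x = his_value d].

End POMDP.

From HB Require Import structures.
From mathcomp Require Import all_boot all_order all_algebra.
From mathcomp Require Import boolp classical_sets reals.
From mathcomp Require Import lra ring.
Set Implicit Arguments. Unset Strict Implicit. Unset Printing Implicit Defensive.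
Import Order.TTheory GRing.Theory Num.Theory.
Local Open Scope ring_scope.

(* Structure of the proof.
   1. The MILP constraints split into a "flow" part (nonnegativity, the state
      and action balance equations (i)-(iv) and the McCormick bound
      mu_soa <= p(o|s) nu_s) and a "decision rule" part (bounds on delta and
      the two McCormick bounds involving delta).  A flow yields an MDP LP
      solution; conversely an MDP solution yields a flow, and every flow whose
      action marginals are p(o|s) nu_s admits an explicit relaxed decision
      rule (the normalised action marginal).  Hence R and the MDP LP agree.
   2. A history-dependent policy drives a Markov process on trajectory
      prefixes.  Through an expectation operator on prefixes we define its
      occupancy measures, show they form a flow satisfying the additional
      constraints of R^c, and that their objective is the policy's value.
   3. For an integral solution, McCormick forces mu_soa = p(o|s) nu_s delta_ao,
      so by induction on t it coincides with the occupancy measure of the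
      policy that plays delta regardless of the history.
   4. The four sets of values are nested, bounded, and all nonempty when one
      is; comparing suprema gives the chain. *)

Lemma sum_indicator (R : pzSemiRingType) (I : finType) (c : I) (F : I -> R) :
  \sum_i (c == i)%:R * F i = F c.
Proof.
rewrite (bigD1 c) //= eqxx mul1r big1 ?addr0 // => i /negbTE.
by rewrite eq_sym => ->; rewrite mul0r.
Qed.

Lemma sum_indicatorr (R : pzSemiRingType) (I : finType) (c : I) (F : I -> R) :
  \sum_i F i * (i == c)%:R = F c.
Proof.
rewrite -[RHS](sum_indicator c F); apply: eq_bigr => i _.
by rewrite eq_sym; case: (c == i); rewrite ?mulr1 ?mul1r ?mulr0 ?mul0r.
Qed.

Lemma sum_pair (R : pzSemiRingType) (I J : finType) (F : I * J -> R) :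
  \sum_(x : I * J) F x = \sum_i \sum_j F (i, j).
Proof. by rewrite pair_big; apply: eq_bigr => -[]. Qed.

Lemma le_sum_ge0 (R : numDomainType) (I : finType) (f : I -> R) i :
  (forall j, 0 <= f j) -> f i <= \sum_j f j.
Proof. by move=> f0; rewrite (bigD1 i) //= lerDl; apply: sumr_ge0. Qed.

Lemma le1_of_sum1 (R : numDomainType) (I : finType) (f : I -> R) i :
  (forall j, 0 <= f j) -> \sum_j f j = 1 -> f i <= 1.
Proof. by move=> f0 <-; exact: le_sum_ge0. Qed.

Lemma card_gt0_of_sum (R : nmodType) (I : finType) (F : I -> R) :
  \sum_i F i != 0 -> (0 < #|I|)%N.
Proof.
case: (pickP (@predT I)) => [i _ _|none]; first by apply/card_gt0P; exists i.
by rewrite big_pred0 ?eqxx.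
Qed.

(* Finite functions on 'I_n.+1 decompose as a head and a tail, and a function
   into a product is a pair of functions: the two reindexings used to turn the
   trajectory sums of [his_value] into iterated one-step sums. *)

Definition fcons (X : finType) n (x : X) (g : {ffun 'I_n -> X}) : {ffun 'I_n.+1 -> X} :=
  [ffun i => if unlift ord0 i is Some j then g j else x].

Lemma fcons0 (X : finType) n x (g : {ffun 'I_n -> X}) : fcons x g ord0 = x.
Proof. by rewrite ffunE unlift_none. Qed.

Lemma fconsS (X : finType) n x (g : {ffun 'I_n -> X}) i : fcons x g (lift ord0 i) = g i.
Proof. by rewrite ffunE liftK. Qed.

Lemma codom_fcons (X : finType) n x (g : {ffun 'I_n -> X}) :
  codom (fcons x g) = x :: codom g.
Proof.
rewrite !codomE enum_ordSl /= fcons0 -map_comp; congr cons.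
by apply: eq_map => j; rewrite /= fconsS.
Qed.

Lemma nth_codom (X : finType) n x0 (g : {ffun 'I_n -> X}) (j : 'I_n) :
  nth x0 (codom g) j = g j.
Proof. by rewrite codomE (nth_map j) ?size_enum_ord // nth_ord_enum. Qed.

Lemma sum_fcons (R : nmodType) (X : finType) n (F : {ffun 'I_n.+1 -> X} -> R) :
  \sum_g F g = \sum_x \sum_(g : {ffun 'I_n -> X}) F (fcons x g).
Proof.
rewrite pair_big /=.
have bij : bijective (fun p : X * {ffun 'I_n -> X} => fcons p.1 p.2).
  exists (fun g : {ffun 'I_n.+1 -> X} => (g ord0, [ffun j => g (lift ord0 j)])).
    move=> [x g] /=; rewrite fcons0; congr pair; apply/ffunP => j.
    by rewrite ffunE fconsS.
  move=> g; apply/ffunP => i; rewrite ffunE /=.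
  by case: unliftP => [j ->|->]; rewrite ?ffunE.
by rewrite (reindex _ (onW_bij _ bij)).
Qed.

Lemma sum_zip (R : nmodType) (I X Y : finType) (F : {ffun I -> X} -> {ffun I -> Y} -> R) :
  \sum_f \sum_g F f g =
  \sum_(h : {ffun I -> X * Y}) F [ffun i => (h i).1] [ffun i => (h i).2].
Proof.
rewrite pair_big /=.
have bij : bijective (fun h : {ffun I -> X * Y} =>
   ([ffun i => (h i).1], [ffun i => (h i).2])).
  exists (fun p : {ffun I -> X} * {ffun I -> Y} => [ffun i => (p.1 i, p.2 i)]).
    by move=> h; apply/ffunP => i; rewrite !ffunE; case: (h i).
  by move=> [f g] /=; congr pair; apply/ffunP => i; rewrite !ffunE.
by rewrite (reindex _ (onW_bij _ bij)).
Qed.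

Lemma filter_lt_enum_ord n (i : 'I_n) :
  [seq j : 'I_n <- enum 'I_n | (j < i)%N] = take i (enum 'I_n).
Proof.
apply: (@inj_map _ _ (@nat_of_ord n) (@ord_inj n)).
rewrite -[in LHS](filter_map _ (fun k => (k < i)%N)) map_take val_enum_ord take_iota.
by rewrite (filter_iota_ltn 0 (ltnW (ltn_ord i))) (minn_idPl (ltnW (ltn_ord i))).
Qed.

(* Suprema of nested sets of reals: the inclusion must not go from an empty
   set into a nonempty one, since [sup set0 = 0]. *)
Lemma sup_le_subset (R : realType) (E F : set R) :
  (forall x, E x -> F x) -> has_ubound F -> ((exists x, F x) -> exists x, E x) ->
  sup E <= sup F.
Proof.
move=> EF Fub neEF; have [[x Fx]|noF] := pselect (exists x, F x).
  apply: sup_le; first by move=> y /EF; exact: le_down.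
    exact: neEF (ex_intro _ x Fx).
  by split => //; exists x.
have E0 : E = set0 by apply/seteqP; split => // x /EF Fx; apply: noF; exists x.
have F0 : F = set0 by apply/seteqP; split => // x Fx; apply: noF; exists x.
by rewrite E0 F0.
Qed.

Section ModelFacts.
Context (R : realType) (S O A : finType) (P : pomdp R S O A).
Hypothesis HP : is_pomdp P.

Lemma p0_ge0 s : 0 <= p0 P s. Proof. by case: HP. Qed.
Lemma p0_sum : \sum_s p0 P s = 1. Proof. by case: HP => _ []. Qed.
Lemma pe_ge0 s o : 0 <= pe P s o. Proof. by case: HP => _ [_ []]. Qed.
Lemma pe_sum s : \sum_o pe P s o = 1. Proof. by case: HP => _ [_ [_ []]]. Qed.
Lemma pt_ge0 s a s' : 0 <= pt P s a s'. Proof. by case: HP => _ [_ [_ [_ []]]]. Qed.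
Lemma pt_sum s a : \sum_s' pt P s a s' = 1. Proof. by case: HP => _ [_ [_ [_ []]]]. Qed.
Lemma pe_le1 s o : pe P s o <= 1. Proof. exact: le1_of_sum1 (pe_ge0 s) (pe_sum s). Qed.

Variable d : hpolicy R O A.
Hypothesis Hd : is_hpolicy d.

Lemma pol_ge0 t h o a : 0 <= d t h o a. Proof. by case: (Hd t h o). Qed.
Lemma pol_sum t h o : \sum_a d t h o a = 1. Proof. by case: (Hd t h o). Qed.
Lemma pol_le1 t h o a : d t h o a <= 1.
Proof. exact: le1_of_sum1 (pol_ge0 t h o) (pol_sum t h o). Qed.
End ModelFacts.

(* Normalising the column sums N(a) gives
   a distribution over actions satisfying both McCormick bounds with m. *)
Section MarginalRule.
Context (R : realFieldType) (I J : finType).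
Variables (m : I -> J -> R) (q : I -> R).
Hypotheses (m_ge0 : forall i j, 0 <= m i j) (m_rows : forall i, \sum_j m i j = q i)
  (q_mass : \sum_i q i <= 1).

Let N j := \sum_i m i j.
Let D := \sum_j N j.

Definition marginal_rule (j : J) : R :=
  if D == 0 then #|J|%:R^-1 else N j / D.

Lemma marginal_ge0 j : 0 <= N j. Proof. exact: sumr_ge0. Qed.
Lemma entry_le_marginal i j : m i j <= N j. Proof. exact: le_sum_ge0 (m_ge0^~ j). Qed.
Lemma marginal_le_total j : N j <= D. Proof. exact: le_sum_ge0 marginal_ge0. Qed.

Lemma total_mass : D = \sum_i q i.
Proof. by rewrite /D /N exchange_big; apply: eq_bigr => i _; rewrite m_rows. Qed.

Lemma row_defect_le i j : q i - m i j <= D - N j.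
Proof.
rewrite -m_rows /D (bigD1 j) //= [m i j + _]addrC addrK.
rewrite [\sum_j0 N j0](bigD1 j) //= [N j + _]addrC addrK.
by apply: ler_sum => j' _; exact: entry_le_marginal.
Qed.

Lemma marginal_rule_feasible : (0 < #|J|)%N ->
  (forall j, 0 <= marginal_rule j <= 1) /\ \sum_j marginal_rule j = 1 /\
  (forall i j, m i j <= marginal_rule j) /\
  (forall i j, q i + marginal_rule j - 1 <= m i j).
Proof.
move=> J0; have D1 : D <= 1 by rewrite total_mass.
have qD i : q i <= D by rewrite -m_rows; apply: ler_sum => j _; exact: entry_le_marginal.
rewrite /marginal_rule; have [D0|Dn0] := eqVneq D 0.
  have cardJ0 : (#|J|%:R : R) != 0 by rewrite pnatr_eq0 -lt0n.
  have inv01 : 0 <= (#|J|%:R : R)^-1 <= 1 by rewrite invr_ge0 ler0n invf_le1 ?ltr0n ?ler1n.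
  split=> //; split; first by rewrite sumr_const (eq_card (B := J)) // -[_ *+ _]mulr_natr mulVf.
  split=> i j; have := entry_le_marginal i j; have := marginal_le_total j;
    have := qD i; have := m_ge0 i j; case/andP: inv01; rewrite D0; lra.
have D0 : 0 < D by rewrite lt_def Dn0 sumr_ge0 // => j _; exact: marginal_ge0.
split=> [j|].
  by rewrite divr_ge0 ?marginal_ge0 ?(ltW D0) //= ler_pdivrMr // mul1r marginal_le_total.
split; first by rewrite -mulr_suml mulfV.
split=> i j.
  apply: le_trans (entry_le_marginal i j) _.
  by rewrite ler_pdivlMr // ler_piMr ?marginal_ge0.
have : D - N j <= (D - N j) / D.
  by rewrite ler_pdivlMr // ler_piMr // subr_ge0 marginal_le_total.
have -> : (D - N j) / D = 1 - N j / D by field; rewrite gt_eqF.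
have := row_defect_le i j; lra.
Qed.
End MarginalRule.

Section Feasibility.
Context (R : realType) (S O A : finType) (P : pomdp R S O A) (T : nat).
Hypotheses (HP : is_pomdp P) (HT : (0 < T)%N).

Definition flow_feasible (mu1 : S -> R) (muO : nat -> S -> O -> A -> R)
    (muT : nat -> S -> A -> S -> R) : Prop :=
  (forall s, 0 <= mu1 s) /\ (forall s, mu1 s = p0 P s) /\
  forall t, (1 <= t <= T)%N ->
    (forall s o a, 0 <= muO t s o a) /\ (forall s a s', 0 <= muT t s a s') /\
    (forall s, \sum_o \sum_a muO t s o a = nuv mu1 muT t s) /\
    (forall s a, \sum_sb muT t s a sb = \sum_o muO t s o a) /\
    (forall s a s', muT t s a s' = pt P s a s' * \sum_sb muT t s a sb) /\
    (forall s o a, muO t s o a <= pe P s o * nuv mu1 muT t s).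

Definition rule_feasible (integral : bool) (m : S -> O -> A -> R) (nu : S -> R)
    (del : O -> A -> R) : Prop :=
  (forall o a, if integral then (del o a = 0 \/ del o a = 1)
               else (0 <= del o a /\ del o a <= 1)) /\
  (forall o, \sum_a del o a = 1) /\
  (forall s o a, m s o a <= del o a) /\
  (forall s o a, pe P s o * nu s + del o a - 1 <= m s o a).

Lemma milp_feasibleP integral mu1 muO muT del :
  milp_feasible P T integral mu1 muO muT del <->
  flow_feasible mu1 muO muT /\
  forall t, (1 <= t <= T)%N -> rule_feasible integral (muO t) (nuv mu1 muT t) (del t).
Proof.
split=> [[mu0 [mup F]]|[[mu0 [mup F]] D]].
  split; first split=> //; first split=> // t /F.
    by move=> [_ [_ [? [? [? [? [? [? _]]]]]]]]; do !split.
  by move=> t /F [? [? [_ [_ [_ [_ [_ [_ [? ?]]]]]]]]]; do !split.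
split=> //; split=> // t tT.
have [? [? [? [? [? ?]]]]] := F t tT; have [? [? [? ?]]] := D t tT.
by do !split.
Qed.

Lemma flow_mdp mu1 muO muT : flow_feasible mu1 muO muT -> mdp_feasible P T mu1 muT.
Proof.
case=> mu0 [mup F]; split=> //; split=> //; split.
  by move=> t /F [_ [? _]].
have balance t s : (1 <= t <= T)%N -> \sum_a \sum_s' muT t s a s' = nuv mu1 muT t s.
  move=> /F [_ [_ [<- [sums _]]]].
  by rewrite [RHS]exchange_big; apply: eq_bigr => a _; exact: sums.
split=> [s|]; first by rewrite (balance 1%N) ?HT.
split=> [t /andP [t2 tT] s|]; last by move=> t /F [_ [_ [_ [_ [? _]]]]].
rewrite balance ?tT ?(ltnW t2) // /nuv; case: eqP => // t1.
by rewrite t1 in t2.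
Qed.

Lemma mdp_nuv nu1 nuT t s : mdp_feasible P T nu1 nuT -> (1 <= t <= T)%N ->
  nuv nu1 nuT t s = \sum_a \sum_s' nuT t s a s'.
Proof.
case=> _ [_ [_ [init [bal _]]]] /andP [t1 tT]; rewrite /nuv.
case: eqP => [->|tn1]; first by rewrite init.
by rewrite bal // tT andbT ltn_neqAle t1 andbT eq_sym; apply/eqP.
Qed.

Lemma mdp_mass nu1 nuT t : mdp_feasible P T nu1 nuT -> (1 <= t <= T)%N ->
  \sum_s \sum_a \sum_s' nuT t s a s' = 1.
Proof.
move=> mdp; elim: t => // t IH /andP [_ tT].
have [_ [nup [_ [init [bal _]]]]] := mdp.
case: t IH tT => [|t] IH tT.
  by rewrite -[RHS](p0_sum HP); apply: eq_bigr => s _; rewrite init nup.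
rewrite -[RHS](IH (ltnW tT)) (eq_bigr _ (fun s _ => bal t.+2 _ s)) ?tT //.
by rewrite exchange_big; apply: eq_bigr => s'' _; rewrite exchange_big.
Qed.

Lemma mdp_nuv_ge0 nu1 nuT t s : mdp_feasible P T nu1 nuT -> (1 <= t <= T)%N ->
  0 <= nuv nu1 nuT t s.
Proof.
move=> mdp tT; have [_ [_ [nu0 _]]] := mdp.
by rewrite mdp_nuv // !sumr_ge0 // => a _; rewrite sumr_ge0 // => s' _; exact: nu0.
Qed.

Lemma mdp_nuv_sum nu1 nuT t : mdp_feasible P T nu1 nuT -> (1 <= t <= T)%N ->
  \sum_s nuv nu1 nuT t s = 1.
Proof. by move=> mdp tT; rewrite -(mdp_mass mdp tT); apply: eq_bigr => s _; rewrite mdp_nuv. Qed.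

Lemma mdp_le1 nu1 nuT t s a s' : mdp_feasible P T nu1 nuT -> (1 <= t <= T)%N ->
  nuT t s a s' <= 1.
Proof.
move=> mdp tT; have [_ [_ [nu0 _]]] := mdp.
apply: le_trans (le_sum_ge0 s' (nu0 t tT s a)) _.
rewrite -(mdp_mass mdp tT).
apply: le_trans (le_sum_ge0 a _) (le_sum_ge0 s _) => [a'|s''].
  by rewrite sumr_ge0 // => ? _; exact: nu0.
by rewrite -(mdp_nuv _ mdp tT) (mdp_nuv_ge0 _ mdp tT).
Qed.

Lemma mdp_card_gt0 nu1 nuT : mdp_feasible P T nu1 nuT -> (0 < #|A|)%N.
Proof.
move=> mdp; apply: (@card_gt0_of_sum _ _ (fun a => \sum_s \sum_s' nuT 1%N s a s')).
by rewrite exchange_big (mdp_mass mdp) ?HT ?oner_neq0.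
Qed.

Definition obs_split (nuT : nat -> S -> A -> S -> R) t s o a : R :=
  pe P s o * \sum_s' nuT t s a s'.

Lemma obs_split_sum nu1 nuT t s o : mdp_feasible P T nu1 nuT -> (1 <= t <= T)%N ->
  \sum_a obs_split nuT t s o a = pe P s o * nuv nu1 nuT t s.
Proof. by move=> mdp tT; rewrite -mulr_sumr mdp_nuv. Qed.

Lemma mdp_flow nu1 nuT : mdp_feasible P T nu1 nuT ->
  flow_feasible nu1 (obs_split nuT) nuT.
Proof.
move=> mdp; have [nu10 [nup [nu0 [_ [_ markov]]]]] := mdp.
split=> //; split=> // t tT.
have split0 s o a : 0 <= obs_split nuT t s o a.
  by rewrite mulr_ge0 ?pe_ge0 // sumr_ge0 // => s' _; exact: nu0.
split=> //; split; first exact: nu0.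
split=> [s|]; first by rewrite (eq_bigr _ (fun o _ => obs_split_sum s o mdp tT)) -mulr_suml pe_sum // mul1r.
split=> [s a|]; first by rewrite /obs_split -mulr_suml pe_sum // mul1r.
split=> //; first exact: markov.
move=> s o a; rewrite -(obs_split_sum _ _ mdp tT).
exact: le_sum_ge0 (split0 s o).
Qed.

Definition relaxed_rule (m : S -> O -> A -> R) (o : O) : A -> R :=
  marginal_rule (fun s a => m s o a).

Lemma relaxed_rule_feasible (m : S -> O -> A -> R) (nu : S -> R) :
  (0 < #|A|)%N -> (forall s o a, 0 <= m s o a) -> (forall s, 0 <= nu s) ->
  \sum_s nu s = 1 -> (forall s o, \sum_a m s o a = pe P s o * nu s) ->
  rule_feasible false m nu (relaxed_rule m).
Proof.
move=> A0 m0 nu0 nu1 msum.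
have mass o : \sum_s pe P s o * nu s <= 1.
  rewrite -nu1 ler_sum // => s _.
  by rewrite -[leRHS]mul1r ler_wpM2r ?pe_le1.
have rule o := marginal_rule_feasible (m0^~ o) (msum^~ o) (mass o) A0.
split=> [o a|]; first by have [/(_ a)/andP] := rule o.
split=> [o|]; first by have [_ []] := rule o.
by split=> s o a; have [_ [_ []]] := rule o; [move=> + _ | move=> _ +]; apply.
Qed.
End Feasibility.

(* A history-dependent policy d drives a Markov chain on trajectory prefixes.
   A step (o, a, s') records the observation and action at the current state
   and the next state; a prefix is the list of steps taken from s0. *)
Section Trajectories.
Context (R : realType) (S O A : finType) (P : pomdp R S O A).
Local Notation step := ((O * A) * S)%type.

Definition last_state (s0 : S) (p : seq step) : S := last s0 (map snd p).
Definition obs_hist (p : seq step) : seq (O * A) := map fst p.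

Lemma last_state_rcons s0 p x : last_state s0 (rcons p x) = x.2.
Proof. by rewrite /last_state map_rcons last_rcons. Qed.

Definition step_prob (d : hpolicy R O A) (s0 : S) (p : seq step) (x : step) : R :=
  pe P (last_state s0 p) x.1.1 * pt P (last_state s0 p) x.1.2 x.2 *
  d (size p).+1 (obs_hist p) x.1.1 x.1.2.

Fixpoint expect d s0 (p : seq step) (m : nat) (F : seq step -> R) : R :=
  if m is m'.+1 then \sum_x step_prob d s0 p x * expect d s0 (rcons p x) m' F
  else F p.

Variables (d : hpolicy R O A) (s0 : S).
Hypotheses (HP : is_pomdp P) (Hd : is_hpolicy d).

Lemma step_prob_ge0 p x : 0 <= step_prob d s0 p x.
Proof. by rewrite !mulr_ge0 ?pe_ge0 ?pt_ge0 ?pol_ge0. Qed.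

Lemma step_prob_sum p : \sum_x step_prob d s0 p x = 1.
Proof.
rewrite sum_pair sum_pair -[RHS](pe_sum HP (last_state s0 p)).
apply: eq_bigr => o _; rewrite -[RHS]mulr1 -(pol_sum Hd (size p).+1 (obs_hist p) o).
rewrite mulr_sumr; apply: eq_bigr => a _.
under eq_bigr do rewrite /step_prob /= mulrAC.
by rewrite -mulr_sumr pt_sum // mulr1.
Qed.

Lemma expect_ext p m F G : (forall q, size q = (size p + m)%N -> F q = G q) ->
  expect d s0 p m F = expect d s0 p m G.
Proof.
elim: m p => [|m IH] p FG /=; first by apply: FG; rewrite addn0.
apply: eq_bigr => x _; congr (_ * _); apply: IH => q.
by rewrite size_rcons addSnnS; apply: FG.
Qed.

Lemma expect_sum (I : Type) (r : seq I) (Pi : pred I) p m (F : I -> seq step -> R) :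
  expect d s0 p m (fun q => \sum_(i <- r | Pi i) F i q) =
  \sum_(i <- r | Pi i) expect d s0 p m (F i).
Proof.
elim: m p => [|m IH] p //=.
by rewrite exchange_big; apply: eq_bigr => x _; rewrite IH mulr_sumr.
Qed.

Lemma expect_scale p m c F : expect d s0 p m (fun q => c * F q) = c * expect d s0 p m F.
Proof.
elim: m p => [|m IH] p //=; rewrite mulr_sumr; apply: eq_bigr => x _.
by rewrite IH mulrCA.
Qed.

Lemma expect_le p m F G : (forall q, F q <= G q) -> expect d s0 p m F <= expect d s0 p m G.
Proof.
move=> FG; elim: m p => [|m IH] p //=; apply: ler_sum => x _.
by rewrite ler_wpM2l ?step_prob_ge0 ?IH.
Qed.

Lemma expect_ge0 p m F : (forall q, 0 <= F q) -> 0 <= expect d s0 p m F.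
Proof.
move=> F0; elim: m p => [|m IH] p //=; apply: sumr_ge0 => x _.
by rewrite mulr_ge0 ?step_prob_ge0 ?IH.
Qed.

(* The step probabilities are stochastic, so constants have themselves as
   expectation. *)
Lemma expect_const p m F c : (forall q, F (p ++ q) = c) -> expect d s0 p m F = c.
Proof.
elim: m p => [|m IH] p Fc /=; first by rewrite -(Fc [::]) cats0.
rewrite (eq_bigr (fun x => step_prob d s0 p x * c)).
  by rewrite -mulr_suml step_prob_sum mul1r.
by move=> x _; rewrite IH // => q; rewrite -cats1 -catA.
Qed.

Lemma expect_rcons p m F : expect d s0 p m.+1 F =
  expect d s0 p m (fun q => \sum_x step_prob d s0 q x * F (rcons q x)).
Proof.
elim: m p => [|m IH] p //.
transitivity (\sum_x step_prob d s0 p x * expect d s0 (rcons p x) m.+1 F) => //.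
by rewrite [RHS]/=; apply: eq_bigr => x _; rewrite IH.
Qed.

(* A quantity depending only on the first n steps is fully determined once
   the prefix has length n: further steps do not change its expectation. *)
Lemma expect_take n p m j F : (forall q, F (take n q) = F q) ->
  (n <= size p + j)%N -> (j <= m)%N -> expect d s0 p m F = expect d s0 p j F.
Proof.
move=> Ftake; elim: j m p => [|j IH] m p hn hj /=.
  apply: expect_const => q; rewrite -Ftake -[in RHS]Ftake; congr F.
  rewrite addn0 in hn; rewrite take_cat; case: ltnP => // h.
  have -> : n = size p by apply/eqP; rewrite eqn_leq hn h.
  by rewrite subnn take0 cats0 take_size.
case: m hj => // m hj /=; apply: eq_bigr => x _; rewrite (IH m) //.
by rewrite size_rcons addSnnS.
Qed.
End Trajectories.

Section Occupancy.
Context (R : realType) (S O A : finType) (P : pomdp R S O A).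
Local Notation step := ((O * A) * S)%type.
Variable d : hpolicy R O A.
Hypotheses (HP : is_pomdp P) (Hd : is_hpolicy d).

Definition expect0 i (G : S -> seq step -> R) : R :=
  \sum_s0 p0 P s0 * expect P d s0 [::] i (G s0).

Lemma expect0_sum (J : finType) i (F : J -> S -> seq step -> R) :
  expect0 i (fun s0 q => \sum_j F j s0 q) = \sum_j expect0 i (F j).
Proof.
rewrite /expect0 exchange_big; apply: eq_bigr => s0 _.
by rewrite expect_sum mulr_sumr.
Qed.

Lemma expect0_scale i c G : expect0 i (fun s0 q => c * G s0 q) = c * expect0 i G.
Proof.
rewrite /expect0 mulr_sumr; apply: eq_bigr => s0 _.
by rewrite expect_scale mulrCA.
Qed.

Lemma expect0_ext i F G : (forall s0 q, size q = i -> F s0 q = G s0 q) ->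
  expect0 i F = expect0 i G.
Proof.
by move=> FG; apply: eq_bigr => s0 _; congr (_ * _); apply: expect_ext => q; apply: FG.
Qed.

Lemma expect0_le i F G : (forall s0 q, F s0 q <= G s0 q) -> expect0 i F <= expect0 i G.
Proof.
by move=> FG; apply: ler_sum => s0 _; rewrite ler_wpM2l ?p0_ge0 ?expect_le.
Qed.

Lemma expect0_ge0 i F : (forall s0 q, 0 <= F s0 q) -> 0 <= expect0 i F.
Proof.
by move=> F0; apply: sumr_ge0 => s0 _; rewrite mulr_ge0 ?p0_ge0 ?expect_ge0.
Qed.

Lemma expect0_rcons i F : expect0 i.+1 F =
  expect0 i (fun s0 q => \sum_x step_prob P d s0 q x * F s0 (rcons q x)).
Proof. by apply: eq_bigr => s0 _; rewrite expect_rcons. Qed.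

Lemma expect0_one i : expect0 i (fun _ _ => 1) = 1.
Proof.
rewrite -[RHS](p0_sum HP); apply: eq_bigr => s0 _.
by rewrite (@expect_const _ _ _ _ P d s0 HP Hd _ _ _ 1) ?mulr1.
Qed.

(* Distribution nu_i(s) of the state S_(i+1). *)
Definition occ_state i s := expect0 i (fun s0 q => (last_state s0 q == s)%:R).

(* Joint distribution of (S_(i+1), A_(i+1)). *)
Definition occ_action i s a := expect0 i (fun s0 q =>
  (last_state s0 q == s)%:R * \sum_o pe P s o * d (size q).+1 (obs_hist q) o a).

Definition occ_trans t s a s' := pt P s a s' * occ_action t.-1 s a.
Definition occ_obs t s o a := pe P s o *
  expect0 t.-1 (fun s0 q => (last_state s0 q == s)%:R * d (size q).+1 (obs_hist q) o a).

(* The variables mu^t_(s' a' s o a) of R^c: the joint distribution of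
   (S_(t-1), A_(t-1), S_t, O_t, A_t), factored through the (S_(t-1), A_(t-1),
   O_t, A_t)-weight [pair_weight]. *)
Definition pair_weight t s' a' o a := expect0 t.-2 (fun s0 q => (last_state s0 q == s')%:R *
  \sum_o' pe P s' o' * d (size q).+1 (obs_hist q) o' a' *
          d (size q).+2 (rcons (obs_hist q) (o', a')) o a).
Definition occ_pair t s' a' s o a := pe P s o * pt P s' a' s * pair_weight t s' a' o a.

Lemma occ_state0 s : occ_state 0 s = p0 P s.
Proof. by rewrite /occ_state /expect0 /last_state /= sum_indicatorr. Qed.

Lemma occ_stateS i s :
  occ_state i.+1 s = \sum_s'' \sum_a'' pt P s'' a'' s * occ_action i s'' a''.
Proof.
rewrite /occ_state expect0_rcons.
under eq_bigr do under eq_bigr do rewrite /occ_action -expect0_scale.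
under eq_bigr do rewrite -expect0_sum.
rewrite -expect0_sum; apply: expect0_ext => s0 q _.
under eq_bigr do rewrite last_state_rcons.
rewrite sum_pair sum_pair /=.
under eq_bigr do under eq_bigr do rewrite sum_indicatorr.
under [RHS]eq_bigr do under eq_bigr do rewrite mulrCA.
under [RHS]eq_bigr do rewrite -mulr_sumr.
rewrite sum_indicator exchange_big; apply: eq_bigr => a _.
by rewrite mulr_sumr; apply: eq_bigr => o _; rewrite /step_prob /=; ring.
Qed.

Lemma nuv_occ t s : (0 < t)%N -> nuv (p0 P) occ_trans t s = occ_state t.-1 s.
Proof. by case: t => [|[|t]] // _; rewrite /nuv /= ?occ_state0 ?occ_stateS. Qed.

Lemma sum_occ_trans t s a : \sum_s' occ_trans t s a s' = occ_action t.-1 s a.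
Proof. by rewrite /occ_trans -mulr_suml pt_sum // mul1r. Qed.

Lemma sum_occ_obs_o t s a : \sum_o occ_obs t s o a = occ_action t.-1 s a.
Proof.
rewrite /occ_action; under eq_bigr do rewrite /occ_obs -expect0_scale.
rewrite -expect0_sum; apply: expect0_ext => s0 q _.
by rewrite mulr_sumr; apply: eq_bigr => o _; ring.
Qed.

Lemma sum_occ_obs_a t s o : \sum_a occ_obs t s o a = pe P s o * occ_state t.-1 s.
Proof.
rewrite -mulr_sumr -expect0_sum; congr (_ * _); apply: expect0_ext => s0 q _.
by rewrite -mulr_sumr pol_sum // mulr1.
Qed.

Lemma sum_occ_obs t s : \sum_o \sum_a occ_obs t s o a = occ_state t.-1 s.
Proof. by under eq_bigr do rewrite sum_occ_obs_a; rewrite -mulr_suml pe_sum // mul1r. Qed.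

Lemma sum_occ_state i : \sum_s occ_state i s = 1.
Proof.
rewrite -expect0_sum -[RHS](expect0_one i); apply: expect0_ext => s0 q _.
by under eq_bigr do rewrite -[(_ == _)%:R]mulr1; rewrite sum_indicator.
Qed.

Lemma occ_state_ge0 i s : 0 <= occ_state i s.
Proof. exact: expect0_ge0. Qed.

Lemma occ_action_ge0 i s a : 0 <= occ_action i s a.
Proof.
apply: expect0_ge0 => s0 q; rewrite mulr_ge0 // sumr_ge0 // => o _.
by rewrite mulr_ge0 ?pe_ge0 ?pol_ge0.
Qed.

Lemma occ_trans_ge0 t s a s' : 0 <= occ_trans t s a s'.
Proof. by rewrite mulr_ge0 ?pt_ge0 ?occ_action_ge0. Qed.

Lemma occ_obs_ge0 t s o a : 0 <= occ_obs t s o a.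
Proof.
by rewrite mulr_ge0 ?pe_ge0 // expect0_ge0 // => s0 q; rewrite mulr_ge0 ?pol_ge0.
Qed.

Lemma occ_obs_le t s o a : occ_obs t s o a <= pe P s o * occ_state t.-1 s.
Proof.
rewrite ler_wpM2l ?pe_ge0 // expect0_le // => s0 q.
by rewrite -[leRHS]mulr1 ler_wpM2l ?pol_le1.
Qed.

Lemma occ_pair_ge0 t s' a' s o a : 0 <= occ_pair t s' a' s o a.
Proof.
rewrite !mulr_ge0 ?pe_ge0 ?pt_ge0 // expect0_ge0 // => s0 q.
by rewrite mulr_ge0 // sumr_ge0 // => o' _; rewrite !mulr_ge0 ?pe_ge0 ?pol_ge0.
Qed.

Lemma sum_step_indicator (F : step -> R) s :
  \sum_(x : step) F x * (x.2 == s)%:R = \sum_o \sum_a F ((o, a), s).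
Proof.
rewrite sum_pair sum_pair; apply: eq_bigr => o _; apply: eq_bigr => a _.
exact: sum_indicatorr.
Qed.

Lemma occ_pair_marg_prev t s o a : (1 < t)%N ->
  \sum_s' \sum_a' occ_pair t s' a' s o a = occ_obs t s o a.
Proof.
case: t => [|[|k]] // _; rewrite /occ_obs /= expect0_rcons.
under eq_bigr do under eq_bigr do rewrite /occ_pair -mulrA.
under eq_bigr do rewrite -mulr_sumr.
rewrite -mulr_sumr; congr (_ * _).
under eq_bigr do under eq_bigr do rewrite /pair_weight /= -expect0_scale.
under eq_bigr do rewrite -expect0_sum.
rewrite -expect0_sum; apply: expect0_ext => s0 q _.
rewrite [RHS](eq_bigr (fun x => (step_prob P d s0 q x *
   d (size q).+2 (rcons (obs_hist q) x.1) o a) * (x.2 == s)%:R)); last first.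
  by move=> x _; rewrite last_state_rcons size_rcons /obs_hist map_rcons; ring.
rewrite sum_step_indicator.
under eq_bigr do under eq_bigr do rewrite mulrCA.
under eq_bigr do rewrite -mulr_sumr.
rewrite sum_indicator exchange_big; apply: eq_bigr => a' _.
by rewrite mulr_sumr; apply: eq_bigr => o' _; rewrite /step_prob /=; ring.
Qed.

Lemma occ_pair_marg_act t s' a' s o : (1 < t)%N ->
  \sum_a occ_pair t s' a' s o a = pe P s o * occ_trans t.-1 s' a' s.
Proof.
case: t => [|[|k]] // _.
rewrite /occ_trans /occ_pair -mulr_sumr -mulrA; congr (_ * _); congr (_ * _).
rewrite /pair_weight /occ_action -expect0_sum /=; apply: expect0_ext => s0 q _.
rewrite -mulr_sumr; congr (_ * _); rewrite exchange_big; apply: eq_bigr => o' _.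
by rewrite -mulr_sumr pol_sum // mulr1.
Qed.

Lemma occ_pair_cond t s' a' s o a :
  occ_pair t s' a' s o a = pcond P s' a' o s * \sum_sb occ_pair t s' a' sb o a.
Proof.
rewrite /occ_pair /pcond -mulr_suml.
set D := \sum_sb pe P sb o * pt P s' a' sb.
have [D0|Dn0] := eqVneq D 0; last by rewrite mulrA divfK.
suff -> : pe P s o * pt P s' a' s = 0 by rewrite !mul0r.
apply/eqP; move: D0 => /eqP; rewrite psumr_eq0 => [/allP/(_ s (mem_index_enum _))//|].
by move=> sb _; rewrite mulr_ge0 ?pe_ge0 ?pt_ge0.
Qed.
End Occupancy.

Section PolicyValue.
Context (R : realType) (S O A : finType) (P : pomdp R S O A).
Local Notation step := ((O * A) * S)%type.
Variable d : hpolicy R O A.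
Hypotheses (HP : is_pomdp P) (Hd : is_hpolicy d).

Lemma expect_as_sum (s0 : S) n (p : seq step) (F : seq step -> R) :
  \sum_(g : {ffun 'I_n -> step})
     (\prod_(i < n) step_prob P d s0 (p ++ take i (codom g)) (g i)) * F (p ++ codom g)
  = expect P d s0 p n F.
Proof.
elim: n p => [|n IH] p.
  rewrite (eq_bigr (fun _ => F p)).
    by rewrite sumr_const card_ffun card_ord expn0 mulr1n.
  move=> g _; rewrite big_ord0 mul1r.
  have : size (codom g) = 0%N by rewrite size_codom card_ord.
  by case: (codom g) => // _; rewrite cats0.
rewrite sum_fcons /=; apply: eq_bigr => x _.
rewrite -(IH (rcons p x)) mulr_sumr; apply: eq_bigr => g _.
rewrite big_ord_recl codom_fcons fcons0 /= cats0 -mulrA; congr (_ * _).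
rewrite -cat_rcons; congr (_ * _); apply: eq_bigr => i _.
by rewrite fconsS add0n -cat_rcons.
Qed.

(* Reward r(s_(i+1), a_(i+1), s_(i+2)) collected at step i of a prefix. *)
Definition step_reward (i : nat) (s0 : S) (q : seq step) : R :=
  if drop i q is x :: _ then rw P (last_state s0 (take i q)) x.1.2 x.2 else 0.

Lemma step_reward_take i s0 q : step_reward i s0 (take i.+1 q) = step_reward i s0 q.
Proof.
rewrite /step_reward; case E: (drop i q) => [|x r].
  have /eqP : size (drop i q) = 0%N by rewrite E.
  rewrite size_drop subn_eq0 => h.
  by rewrite (take_oversize (leq_trans h (leqnSn i))) E.
have hs : size (take i q) = i.
  apply: size_takel; have : size (drop i q) = (size r).+1 by rewrite E.
  by rewrite size_drop => h; apply/ltnW; rewrite -subn_gt0 h.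
have hq : q = take i q ++ x :: r by rewrite -E cat_take_drop.
have -> : take i.+1 q = take i q ++ [:: x].
  by rewrite {1}hq take_cat hs ltnNge leqnSn /= subSnn /= take0.
by rewrite drop_size_cat // take_size_cat.
Qed.

Lemma his_value_expect T :
  his_value P T d = expect0 P d T (fun s0 q => \sum_(i < T) step_reward i s0 q).
Proof.
rewrite /his_value /expect0 sum_fcons; apply: eq_bigr => s0 _.
under eq_bigr => g2 _ do rewrite sum_zip.
rewrite exchange_big sum_zip -expect_as_sum mulr_sumr; apply: eq_bigr => g _.
set c := codom g.
have hsz : size c = T by rewrite size_codom card_ord.
have states i : fcons s0 [ffun j => (g j).2] i = last_state s0 (take i c).
  case: (unliftP ord0 i) => [j ->|->]; last by rewrite fcons0 take0.
  rewrite fconsS ffunE lift0 (take_nth (g j)) ?hsz //.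
  by rewrite nth_codom last_state_rcons.
rewrite /traj_prob /traj_reward fcons0 -mulrA; congr (_ * _); congr (_ * _).
  apply: eq_bigr => i _; rewrite /step_prob /= fconsS !states /= !ffunE /=.
  rewrite size_takel ?hsz ?(ltnW (ltn_ord i)) //; congr (_ * _ * d _ _ _ _).
  have -> : obs_hist (take i c) = map (fun j => (g j).1) (take i (enum 'I_T)).
    by rewrite /obs_hist /c codomE -map_take -map_comp.
  rewrite /hist filter_lt_enum_ord.
  by apply: eq_map => j /=; rewrite !ffunE; case: (g j) => -[].
apply: eq_bigr => i _; rewrite fconsS states !ffunE /=.
by rewrite /step_reward (drop_nth (g i)) ?hsz // nth_codom.
Qed.

Lemma objective_term T i : (i < T)%N ->
  \sum_s \sum_a \sum_s' rw P s a s' * occ_trans P d i.+1 s a s' =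
  expect0 P d T (step_reward i).
Proof.
move=> iT.
transitivity (expect0 P d i (fun s0 q =>
    \sum_x step_prob P d s0 q x * rw P (last_state s0 q) x.1.2 x.2)).
  under eq_bigr do under eq_bigr do under eq_bigr do
    rewrite /occ_trans /= /occ_action mulrA -expect0_scale.
  under eq_bigr do under eq_bigr do rewrite -expect0_sum.
  under eq_bigr do rewrite -expect0_sum.
  rewrite -expect0_sum; apply: expect0_ext => s0 q _.
  under eq_bigr do under eq_bigr do under eq_bigr do rewrite mulrCA.
  under eq_bigr do under eq_bigr do rewrite -mulr_sumr.
  under eq_bigr do rewrite -mulr_sumr.
  rewrite sum_indicator sum_pair sum_pair [RHS]exchange_big; apply: eq_bigr => a _.
  rewrite [RHS]exchange_big; apply: eq_bigr => s' _.
  by rewrite mulr_sumr; apply: eq_bigr => o _; rewrite /step_prob /=; ring.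
transitivity (expect0 P d i.+1 (step_reward i)).
  rewrite expect0_rcons; apply: expect0_ext => s0 q hq; apply: eq_bigr => x _.
  by rewrite /step_reward -cats1 drop_size_cat // take_size_cat.
apply: eq_bigr => s0 _; congr (_ * _); symmetry.
by apply: (@expect_take _ _ _ _ P d s0 HP Hd i.+1) => //; exact: step_reward_take.
Qed.

Lemma his_value_occ T : his_value P T d = objective P T (occ_trans P d).
Proof.
rewrite his_value_expect expect0_sum /objective big_add1 /= big_mkord.
by apply: eq_bigr => i _; rewrite (objective_term (ltn_ord i)).
Qed.
End PolicyValue.

Section PolicyFeasibility.
Context (R : realType) (S O A : finType) (P : pomdp R S O A) (T : nat).
Variable d : hpolicy R O A.
Hypotheses (HP : is_pomdp P) (Hd : is_hpolicy d).

Lemma nuv_occE t : (0 < t)%N -> nuv (p0 P) (occ_trans P d) t = occ_state P d t.-1.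
Proof. by move=> t0; apply/funext => s; rewrite nuv_occ. Qed.

Lemma occupancy_flow : flow_feasible P T (p0 P) (occ_obs P d) (occ_trans P d).
Proof.
split; first exact: p0_ge0.
split=> // t /andP [t0 _]; rewrite nuv_occE //.
split; first exact: occ_obs_ge0.
split; first exact: occ_trans_ge0.
split=> [s|]; first exact: sum_occ_obs.
split=> [s a|]; first by rewrite sum_occ_trans // sum_occ_obs_o.
split=> [s a s'|]; first by rewrite sum_occ_trans.
exact: occ_obs_le.
Qed.

Lemma occupancy_rc : rc_extra P T (occ_obs P d) (occ_trans P d) (occ_pair P d).
Proof.
move=> t /andP [t1 _]; split; first exact: occ_pair_ge0.
split=> [s o a|]; first exact: occ_pair_marg_prev.
split=> [s' a' s o|]; first exact: occ_pair_marg_act.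
exact: occ_pair_cond.
Qed.
End PolicyFeasibility.

Lemma mccormick_binary (R : realDomainType) (x y m : R) : (y = 0 \/ y = 1) -> 0 <= x <= 1 ->
  (0 <= m /\ m <= x /\ m <= y /\ x + y - 1 <= m) <-> m = x * y.
Proof.
move=> y01 /andP [x0 x1]; split.
  by case: y01 => -> [m0 [mx [my mxy]]]; rewrite ?mulr0 ?mulr1; lra.
by case: y01 => -> ->; rewrite ?mulr0 ?mulr1; lra.
Qed.

Section Relations.
Context (R : realType) (S O A : finType) (P : pomdp R S O A) (T : nat).
Hypotheses (HP : is_pomdp P) (HT : (0 < T)%N).

(* The two translations between the relaxation R and the MDP LP; both keep
   the variables mu^t_(s a s'), hence the objective. *)
Lemma relaxation_to_mdp mu1 muO muT del : milp_feasible P T false mu1 muO muT del ->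
  mdp_feasible P T mu1 muT.
Proof. by case/milp_feasibleP => /(flow_mdp HT). Qed.

Lemma mdp_to_relaxation nu1 nuT : mdp_feasible P T nu1 nuT ->
  milp_feasible P T false nu1 (obs_split P nuT) nuT (fun t => relaxed_rule (obs_split P nuT t)).
Proof.
move=> mdp; have flow := mdp_flow HP mdp.
apply/milp_feasibleP; split=> // t tT.
apply: (relaxed_rule_feasible HP (mdp_card_gt0 HP HT mdp)).
- by have [_ [_ /(_ t tT) [+ _]]] := flow.
- by move=> s; apply: mdp_nuv_ge0 mdp tT.
- exact: mdp_nuv_sum mdp tT.
- by move=> s o; apply: obs_split_sum mdp tT.
Qed.

Lemma policy_to_rc d : is_hpolicy d -> exists mu1 muO muT del muC,
  milp_feasible P T false mu1 muO muT del /\ rc_extra P T muO muT muC /\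
  his_value P T d = objective P T muT.
Proof.
move=> Hd; have flow := occupancy_flow T HP Hd.
exists (p0 P), (occ_obs P d), (occ_trans P d), (fun t => relaxed_rule (occ_obs P d t)).
exists (occ_pair P d); split; last by split; [exact: occupancy_rc | exact: his_value_occ].
apply/milp_feasibleP; split=> // t /andP [t0 tT]; rewrite nuv_occE //.
apply: relaxed_rule_feasible => //.
- exact: mdp_card_gt0 (flow_mdp HT flow).
- exact: occ_obs_ge0.
- exact: occ_state_ge0.
- exact: sum_occ_state.
- exact: sum_occ_obs_a.
Qed.

Definition markov_policy (del : nat -> O -> A -> R) : hpolicy R O A :=
  fun t _ o a => del (if (1 <= t <= T)%N then t else 1%N) o a.

Lemma markov_policyE del t h o a : (1 <= t <= T)%N -> markov_policy del t h o a = del t o a.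
Proof. by rewrite /markov_policy => ->. Qed.

Lemma markov_policy_hpolicy del :
  (forall t, (1 <= t <= T)%N -> forall o, (forall a, 0 <= del t o a) /\ \sum_a del t o a = 1) ->
  is_hpolicy (markov_policy del).
Proof. by move=> D t h o; apply: D; case: ifP => //; rewrite leqnn HT. Qed.

Lemma integral_markov_policy mu1 muO muT del :
  milp_feasible P T true mu1 muO muT del -> is_hpolicy (markov_policy del).
Proof.
case/milp_feasibleP => _ D; apply: markov_policy_hpolicy => t /D [binary [sum1 _]] o.
by split=> // a; case: (binary o a) => ->.
Qed.

(* For an integral solution, McCormick pins mu^t_soa = p(o|s) nu^t_s delta^t_oa,
   so the flow of time t is the occupancy of [markov_policy del] as soon as
   the state distributions nu^t agree. *)
Lemma integral_step mu1 muO muT del t :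
  milp_feasible P T true mu1 muO muT del -> (1 <= t <= T)%N ->
  nuv mu1 muT t = occ_state P (markov_policy del) t.-1 ->
  forall s a s', muT t s a s' = occ_trans P (markov_policy del) t s a s'.
Proof.
move=> feas tT nuE s a s'; have Hd := integral_markov_policy feas.
case/milp_feasibleP: feas => [[_ [_ F]] D].
have [muO0 [_ [_ [sumT [markov up]]]]] := F t tT.
have [binary [_ [le_del ge_del]]] := D t tT.
have nu01 : 0 <= occ_state P (markov_policy del) t.-1 s <= 1.
  by rewrite occ_state_ge0 // (le1_of_sum1 s (occ_state_ge0 HP Hd _) (sum_occ_state HP Hd _)).
have muOE o : muO t s o a = pe P s o * occ_state P (markov_policy del) t.-1 s * del t o a.
  have x01 : 0 <= pe P s o * occ_state P (markov_policy del) t.-1 s <= 1.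
    case/andP: nu01 => nu0 nu1; rewrite mulr_ge0 ?pe_ge0 //=.
    by rewrite -[1]mulr1 ler_pM ?pe_ge0 ?pe_le1.
  apply: (@mccormick_binary _ _ _ _ (binary o a) x01).1.
  by rewrite -nuE; split; [exact: muO0 | split; [exact: up | split]].
rewrite markov sumT /occ_trans; congr (_ * _).
rewrite /occ_action (@expect0_ext _ _ _ _ _ _ _ _ (fun s0 q =>
  (\sum_o pe P s o * del t o a) * (last_state s0 q == s)%:R)); last first.
  by move=> s0 q qt; rewrite mulrC qt prednK ?(proj1 (andP tT)) //; congr (_ * _);
    apply: eq_bigr => o _; rewrite markov_policyE.
by rewrite expect0_scale mulr_suml; apply: eq_bigr => o _; rewrite muOE mulrAC.
Qed.

Lemma integral_occupancy mu1 muO muT del :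
  milp_feasible P T true mu1 muO muT del -> forall t, (1 <= t <= T)%N ->
  forall s a s', muT t s a s' = occ_trans P (markov_policy del) t s a s'.
Proof.
move=> feas t tT; apply: (integral_step feas tT); apply/funext => s.
elim: t tT s => // t IH /andP [_ tT] s; case: t IH tT => [|t] IH tT.
  by case/milp_feasibleP: feas => [[_ [init _]] _]; rewrite /nuv /= init occ_state0.
have tT' : (1 <= t.+1 <= T)%N by rewrite /= (ltnW tT).
rewrite /nuv /= occ_stateS; apply: eq_bigr => s'' _; apply: eq_bigr => a'' _.
by rewrite (integral_step feas tT' (funext (IH tT'))).
Qed.

Lemma milp_to_policy mu1 muO muT del : milp_feasible P T true mu1 muO muT del ->
  exists d, is_hpolicy d /\ objective P T muT = his_value P T d.
Proof.
move=> feas; have Hd := integral_markov_policy feas.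
exists (markov_policy del); split=> //; rewrite his_value_occ //.
apply: eq_big_nat => t tT; do 3 (apply: eq_bigr => ? _).
by rewrite (integral_occupancy feas tT).
Qed.

(* The MILP is feasible as soon as there is an action: always play a0. *)
Lemma milp_nonempty (a0 : A) :
  exists mu1 muO muT del, milp_feasible P T true mu1 muO muT del.
Proof.
pose del (t : nat) (o : O) (a : A) : R := (a == a0)%:R.
have del_sum : \sum_a (a == a0)%:R = 1 :> R.
  by rewrite -[RHS](sum_indicator a0 (fun _ => 1)); apply: eq_bigr => a _; rewrite mulr1 eq_sym.
have Hd : is_hpolicy (markov_policy del) by apply: markov_policy_hpolicy.
have obsE t s o a : occ_obs P (markov_policy del) t s o a =
    pe P s o * occ_state P (markov_policy del) t.-1 s * (a == a0)%:R.
  rewrite /occ_obs -mulrA; congr (_ * _); rewrite [RHS]mulrC -expect0_scale.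
  by apply: expect0_ext => s0 q _; rewrite mulrC.
exists (p0 P), (occ_obs P (markov_policy del)), (occ_trans P (markov_policy del)), del.
apply/milp_feasibleP; split; first exact: occupancy_flow.
move=> t /andP [t0 tT]; rewrite nuv_occE //.
have x01 s o : 0 <= pe P s o * occ_state P (markov_policy del) t.-1 s <= 1.
  have [nu0 nu1] := (occ_state_ge0 HP Hd t.-1 s, le1_of_sum1 s (occ_state_ge0 HP Hd _) (sum_occ_state HP Hd t.-1)).
  by rewrite mulr_ge0 ?pe_ge0 //= -[1]mulr1 ler_pM ?pe_ge0 ?pe_le1.
have binary a : (a == a0)%:R = 0 :> R \/ (a == a0)%:R = 1 :> R.
  by case: (a == a0); [right | left].
have mc s o a := (@mccormick_binary _ _ _ _ (binary a) (x01 s o)).2 (obsE t s o a).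
split=> [o a|]; first exact: binary.
split=> [o|]; first exact: del_sum.
by split=> s o a; have [_ [_ []]] := mc s o a.
Qed.

(* Objective values of MDP solutions are bounded, since each mu^t_(s a s')
   lies in [0, 1]. *)
Definition reward_bound : R :=
  \sum_(1 <= t < T.+1) \sum_s \sum_a \sum_s' `|rw P s a s'|.

Lemma mdp_objective_le nu1 nuT : mdp_feasible P T nu1 nuT -> objective P T nuT <= reward_bound.
Proof.
move=> mdp; have [_ [_ [nu0 _]]] := mdp.
apply: ler_sum_nat => t tT; do 3 (apply: ler_sum => ? _).
apply: le_trans (ler_norm _) _; rewrite normrM [X in _ * X]ger0_norm ?nu0 //.
by rewrite -[leRHS]mulr1 ler_wpM2l ?(mdp_le1 HP _ _ _ mdp).
Qed.

(* A relaxed solution exhibits an action, hence an integral solution. *)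
Lemma relaxation_to_milp mu1 muO muT del : milp_feasible P T false mu1 muO muT del ->
  exists mu1' muO' muT' del', milp_feasible P T true mu1' muO' muT' del'.
Proof.
move=> /relaxation_to_mdp /(mdp_card_gt0 HP HT) /card_gt0P [a0 _].
exact: milp_nonempty a0.
Qed.

Local Open Scope classical_set_scope.

Definition milp_values (integral : bool) : set R := [set x | exists mu1 muO muT del,
  milp_feasible P T integral mu1 muO muT del /\ x = objective P T muT].
Definition rc_values : set R := [set x | exists mu1 muO muT del muC,
  milp_feasible P T false mu1 muO muT del /\ rc_extra P T muO muT muC /\
  x = objective P T muT].
Definition policy_values : set R := [set x | exists d, is_hpolicy d /\ x = his_value P T d].

Lemma milp_policy_values x : milp_values true x -> policy_values x.
Proof.
move=> [mu1 [muO [muT [del [feas ->]]]]].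
by have [d [Hd ->]] := milp_to_policy feas; exists d.
Qed.

Lemma policy_rc_values x : policy_values x -> rc_values x.
Proof.
move=> [d [Hd ->]]; have [mu1 [muO [muT [del [muC [feas [rc ->]]]]]]] := policy_to_rc Hd.
by exists mu1, muO, muT, del, muC.
Qed.

Lemma rc_relaxation_values x : rc_values x -> milp_values false x.
Proof. by move=> [mu1 [muO [muT [del [_ [feas [_ ->]]]]]]]; exists mu1, muO, muT, del. Qed.

Lemma relaxation_values_bounded : has_ubound (milp_values false).
Proof.
exists reward_bound => _ [mu1 [muO [muT [del [feas ->]]]]].
exact: mdp_objective_le (relaxation_to_mdp feas).
Qed.

Lemma relaxation_values_nonempty :
  (exists x, milp_values false x) -> exists x, milp_values true x.
Proof.
move=> [_ [mu1 [muO [muT [del [/relaxation_to_milp feas _]]]]]].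
by have [mu1' [muO' [muT' [del' feas']]]] := feas; exists (objective P T muT'), mu1', muO', muT', del'.
Qed.

Lemma value_chain : z_MILP P T <= v_his P T /\ v_his P T <= z_Rc P T /\ z_Rc P T <= z_R P T.
Proof.
have policy_relaxation x : policy_values x -> milp_values false x.
  by move/policy_rc_values/rc_relaxation_values.
have bounded E : (forall x, E x -> milp_values false x) -> has_ubound E.
  by move=> sub; have [b ub] := relaxation_values_bounded; exists b => x /sub /ub.
have nonempty (E F : set R) : (forall x, milp_values true x -> E x) ->
    (forall x, F x -> milp_values false x) -> (exists x, F x) -> exists x, E x.
  by move=> MI IR [x /IR /(ex_intro _ x) /relaxation_values_nonempty [y /MI]]; exists y.
change (sup (milp_values true) <= sup policy_values /\
  sup policy_values <= sup rc_values /\ sup rc_values <= sup (milp_values false)).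
split; last split; apply: sup_le_subset.
- exact: milp_policy_values.
- exact: bounded policy_relaxation.
- exact: nonempty _ _ (fun x Mx => Mx) policy_relaxation.
- exact: policy_rc_values.
- exact: bounded rc_relaxation_values.
- exact: nonempty _ _ milp_policy_values rc_relaxation_values.
- exact: rc_relaxation_values.
- exact: relaxation_values_bounded.
- by apply: (nonempty _ _ _ (fun x Rx => Rx)) => x /milp_policy_values /policy_rc_values.
Qed.
End Relations.

Theorem mainTheorem3 (R : realType) (S O A : finType) (P : pomdp R S O A) (T : nat) :
  is_pomdp P -> (0 < T)%N ->
  (forall mu1 muO muT del, milp_feasible P T false mu1 muO muT del ->
     exists nu1 nuT, mdp_feasible P T nu1 nuT /\ objective P T nuT = objective P T muT) /\
  (forall nu1 nuT, mdp_feasible P T nu1 nuT ->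
     exists mu1 muO muT del, milp_feasible P T false mu1 muO muT del /\
       objective P T muT = objective P T nuT) /\
  z_R P T = v_MDP P T /\
  z_MILP P T <= v_his P T /\ v_his P T <= z_Rc P T /\ z_Rc P T <= z_R P T.
Proof.
move=> HP HT.
have to_mdp mu1 muO muT del : milp_feasible P T false mu1 muO muT del ->
    exists nu1 nuT, mdp_feasible P T nu1 nuT /\ objective P T nuT = objective P T muT.
  by move=> feas; exists mu1, muT; split=> //; exact: relaxation_to_mdp feas.
have to_relaxation nu1 nuT : mdp_feasible P T nu1 nuT ->
    exists mu1 muO muT del, milp_feasible P T false mu1 muO muT del /\
      objective P T muT = objective P T nuT.
  move=> mdp; exists nu1, (obs_split P nuT), nuT, (fun t => relaxed_rule (obs_split P nuT t)).
  by split=> //; exact: mdp_to_relaxation.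
split=> //; split=> //; split; last exact: value_chain.
rewrite /z_R /v_MDP; congr sup; apply/seteqP; split=> x.
  move=> [mu1 [muO [muT [del [/to_mdp [nu1 [nuT [mdp same]]] ->]]]]].
  by exists nu1, nuT; rewrite same.
move=> [nu1 [nuT [/to_relaxation [mu1 [muO [muT [del [feas same]]]]] ->]]].
by exists mu1, muO, muT, del; rewrite same.
Qed.
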